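(* In the Classified Reallocation algorithm (with power-of-two laxities), suppose a client $c_i$ is reallocated to the big channel during the processing of a departure (because it lies in a $w$-channel with $w>2\tau$ after $\tau$ is updated). Let $n$ be the number of active clients at the time of this reallocation and $n'$ the number of active clients at the time of the last allocation of $c_i$. Then $n\le n'/2$.
   Context: Model: discrete time; each client $c_i$ has arrival time, departure time and laxity $w_i$ (a power of $2$), and must transmit at least once in every $w_i$ consecutive time steps while active; one transmission per channel per time step. A reallocation is a change of the channel of a client. For $x>0$, $\lceil\lceil x\rceil\rceil$ denotes the smallest power of $2$ not smaller than $x$. Classified Reallocation algorithm. Channels: one \emph{big channel} (all its clients transmit with period $\tau/2$) and \emph{$w$-channels} for powers of two $w$ (clients transmit with period $w$; at most $w$ clients; \emph{full} when holding $w$). State: $n$ (active clients, initially $0$), threshold $\tau$ (initially $2$). Arrival of $c_i$: $n\leftarrow n+1$. If $2\lceil\lceil n\rceil\rceil>\tau$: $\tau\leftarrow 2\lceil\lceil n\rceil\rceil$; each big-channel client $c_j$ with $w_j<\tau/2$ is reallocated to the non-full $w_j$-channel of minimum load (a new one reserved if needed); remaining big-channel clients get period $\tau/2$. Then if $w_i\ge\tau$, $c_i$ goes to the big channel; otherwise to the non-full $w_i$-channel of minimum load (new one reserved if needed). Departure of $c_i$ from channel $c$: $n\leftarrow n-1$. If $c$ is not the big channel: release $c$ if empty; otherwise if some $w_i$-channel $c'\ne c$ is not full, move one client from $c'$ to $c$. Then if $2\lceil\lceil n\rceil\rceil<\tau$: $\tau\leftarrow 2\lceil\lceil n\rceil\rceil$,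 big-channel clients get period $\tau/2$, and every $w$-channel with $w>2\tau$ has all its clients reallocated to the big channel and is released. *)

From mathcomp Require Import all_boot.
Set Implicit Arguments. Unset Strict Implicit. Unset Printing Implicit Defensive.

(* smallest power of 2 not smaller than x  (= 1 for x = 0) *)
Definition cpow2 (x : nat) : nat := 2 ^ up_log 2 x.

(* A w-channel is identified by a pair (w, j): its class w (a power of 2)
   and an index j distinguishing channels of the same class.
   The big channel is [None]; the w-channel (w,j) is [Some (w,j)]. *)
Definition chan := option (nat * nat).

(* An active client: ((identifier, laxity), channel). *)
Definition entry := ((nat * nat) * chan)%type.
Definition ent_id (e : entry) : nat := e.1.1.
Definition ent_w (e : entry) : nat := e.1.2.
Definition ent_ch (e : entry) : chan := e.2.

Record state := State {
  cnt : nat;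
  tau : nat;
  clients : seq entry
}.

Definition init : state := State 0 2 [::].

Inductive event :=
| Arrive (i w : nat)   (* client i arrives with laxity w *)
| Depart (i : nat).

(* Log of channel changes (allocations / reallocations), each tagged with
   the number n of active clients at the time it is performed. *)
Inductive label :=
| LAlloc (i n : nat)   (* client i is (re)allocated to a channel, other than below *)
| LToBig (i n : nat).  (* client i is reallocated to the big channel during a
                          departure, because its w-channel has w > 2 tau *)

Definition lab_client (l : label) : nat :=
  match l with LAlloc i _ => i | LToBig i _ => i end.
Definition lab_n (l : label) : nat :=
  match l with LAlloc _ n => n | LToBig _ n => n end.

(* load of the w-channel c : number of clients on it; a channel of load 0 is
   not in use (released / not reserved) *)
Definition load (cl : seq entry) (c : nat * nat) : nat :=
  count (fun e => ent_ch e == Some c) cl.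

(* c is a legal choice for "the non-full w-channel of minimum load
   (a new one reserved if needed)" *)
Definition place_ok (cl : seq entry) (w : nat) (c : nat * nat) : Prop :=
  c.1 = w /\ load cl c < w /\
  ( (0 < load cl c /\
       forall j, 0 < load cl (w, j) < w -> load cl c <= load cl (w, j))
  \/ (load cl c = 0 /\ forall j, ~ (0 < load cl (w, j) < w)) ).

Definition setch (cl : seq entry) (i : nat) (ch : chan) : seq entry :=
  map (fun e => if ent_id e == i then (e.1, ch) else e) cl.

Definition rem_client (i : nat) (cl : seq entry) : seq entry :=
  filter (fun e => ent_id e != i) cl.

(* arrival, threshold increase: the big-channel clients c_j with
   w_j < tau/2 are reallocated one at a time (in any order) *)
Inductive bigfix (n tau : nat) : seq entry -> seq label -> seq entry -> Prop :=
| bf_done cl :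
    (forall e, e \in cl -> ent_ch e = None -> ~ (ent_w e < tau %/ 2)) ->
    bigfix n tau cl [::] cl
| bf_step cl i w c L cl' :
    (i, w, None) \in cl -> w < tau %/ 2 -> place_ok cl w c ->
    bigfix n tau (setch cl i (Some c)) L cl' ->
    bigfix n tau cl (LAlloc i n :: L) cl'.

Definition arr_update (n1 tau0 : nat) (cl : seq entry)
    (tau1 : nat) (L : seq label) (cl1 : seq entry) : Prop :=
  if tau0 < 2 * cpow2 n1 then tau1 = 2 * cpow2 n1 /\ bigfix n1 tau1 cl L cl1
  else [/\ tau1 = tau0, L = [::] & cl1 = cl].

Definition arr_place (tau1 : nat) (cl : seq entry) (w : nat) (ch : chan) : Prop :=
  if tau1 <= w then ch = None else exists c, ch = Some c /\ place_ok cl w c.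

(* departure of a client of laxity w from channel ch; cl already without it *)
Definition dep_compact (n1 w : nat) (cl : seq entry) (ch : chan)
    (L : seq label) (cl1 : seq entry) : Prop :=
  match ch with
  | None => L = [::] /\ cl1 = cl
  | Some c =>
      if load cl c == 0 then L = [::] /\ cl1 = cl   (* c is released *)
      else
        ((forall c', c' <> c -> c'.1 = w -> ~ (0 < load cl c' < w))
           /\ L = [::] /\ cl1 = cl)
        \/ (exists c' e, c' <> c /\ c'.1 = w /\ 0 < load cl c' < w /\
                             e \in cl /\ ent_ch e = Some c' /\
                             L = [:: LAlloc (ent_id e) n1] /\
                             cl1 = setch cl (ent_id e) (Some c))
  end.

Definition exceeds (t : nat) (e : entry) : bool :=
  match ent_ch e with Some c => 2 * t < c.1 | None => false end.

Definition dep_tau (n1 tau0 : nat) (cl1 : seq entry) : nat * seq label * seq entry :=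
  if 2 * cpow2 n1 < tau0 then
    let t := 2 * cpow2 n1 in
    (t, [seq LToBig (ent_id e) n1 | e <- cl1 & exceeds t e],
        map (fun e => if exceeds t e then (e.1, None) else e) cl1)
  else (tau0, [::], cl1).

Inductive step : state -> event -> seq label -> state -> Prop :=
| StepArr st i w tau1 L1 cl1 ch :
    (exists k, w = 2 ^ k) ->
    i \notin map ent_id (clients st) ->
    arr_update (cnt st).+1 (tau st) (clients st) tau1 L1 cl1 ->
    arr_place tau1 cl1 w ch ->
    step st (Arrive i w) (L1 ++ [:: LAlloc i (cnt st).+1])
         (State (cnt st).+1 tau1 ((i, w, ch) :: cl1))
| StepDep st i w ch L1 cl1 :
    (i, w, ch) \in clients st ->
    dep_compact (cnt st).-1 w (rem_client i (clients st)) ch L1 cl1 ->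
    step st (Depart i)
         (L1 ++ (dep_tau (cnt st).-1 (tau st) cl1).1.2)
         (State (cnt st).-1 (dep_tau (cnt st).-1 (tau st) cl1).1.1
                (dep_tau (cnt st).-1 (tau st) cl1).2).

Inductive run : seq event -> state -> seq label -> Prop :=
| run0 : run [::] init [::]
| runS evs st L e L' st' :
    run evs st L -> step st e L' st' -> run (rcons evs e) st' (L ++ L').

Definition dflt_label : label := LAlloc 0 0.

From mathcomp Require Import all_boot zify.
Set Implicit Arguments. Unset Strict Implicit. Unset Printing Implicit Defensive.

(* A client sitting in a w-channel was last allocated when the number of active
   clients was some n' with w < 2⌈⌈n'⌉⌉: an arrival puts it in a w-channel only
   if w < τ = 2⌈⌈n'⌉⌉, and a compaction moves it into a full w-channel while
   another non-empty w-channel exists, so that w <= n'.  A departure leaving n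
   clients demotes it to the big channel only if w > 2τ = 4⌈⌈n⌉⌉, whence
   ⌈⌈2n⌉⌉ = 2⌈⌈n⌉⌉ < ⌈⌈n'⌉⌉ and 2n <= n'.  Keeping this bound invariant needs
   τ = 2⌈⌈n⌉⌉ and at most one non-empty non-full channel in each class. *)

Lemma cpow2_mono m n : m <= n -> cpow2 m <= cpow2 n.
Proof. by move=> h; rewrite /cpow2 leq_exp2l // leq_up_log. Qed.

Lemma leq_cpow2 n : n <= cpow2 n.
Proof. exact: up_logP. Qed.

Lemma cpow2_gt0 n : 0 < cpow2 n.
Proof. by rewrite expn_gt0. Qed.

Lemma cpow2_double n : 0 < n -> cpow2 (2 * n) = 2 * cpow2 n.
Proof. by move=> h; rewrite /cpow2 up_logMp // expnS. Qed.

Lemma cpow2_double_lt m n : 4 * cpow2 m < 2 * cpow2 n -> 2 * m <= n.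
Proof.
move=> h; rewrite leqNgt; apply/negP => lt.
have m0 : 0 < m by lia.
have := cpow2_mono (ltnW lt); rewrite cpow2_double //; lia.
Qed.

Definition last_n (L : seq label) (i : nat) : nat :=
  foldl (fun a l => if lab_client l == i then lab_n l else a) 0 L.

Lemma last_n_rcons L l i :
  last_n (rcons L l) i = if lab_client l == i then lab_n l else last_n L i.
Proof. by rewrite /last_n -cats1 foldl_cat. Qed.

Lemma last_n_cat L L' i : i \notin map lab_client L' -> last_n (L ++ L') i = last_n L i.
Proof.
elim/last_ind: L' => [|L' l IH]; first by rewrite cats0.
rewrite map_rcons mem_rcons in_cons negb_or -rcons_cat last_n_rcons eq_sym.
by case/andP=> /negbTE-> /IH.
Qed.

Lemma last_n_take L k' k i :
  k' < k <= size L -> lab_client (nth dflt_label L k') = i ->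
  (forall m, k' < m < k -> lab_client (nth dflt_label L m) != i) ->
  last_n (take k L) i = lab_n (nth dflt_label L k').
Proof.
elim: k => // k IH /andP[lt ks] hk' gap.
rewrite (take_nth dflt_label) // last_n_rcons.
have [<-|ne] := eqVneq k' k; first by rewrite hk' eqxx.
have k'k : k' < k by lia.
rewrite (negbTE (gap k _)); last by rewrite k'k ltnSn.
rewrite IH //; first by rewrite k'k ltnW.
by move=> m hm; apply: gap; lia.
Qed.

Lemma eq_Some (c x : nat * nat) : (Some c == Some x :> chan) = (c == x).
Proof. by []. Qed.

Lemma map_ent_id_setch cl i ch : map ent_id (setch cl i ch) = map ent_id cl.
Proof. by rewrite -map_comp; apply: eq_map => e /=; case: ifP. Qed.

Lemma ent_id_inj cl : uniq (map ent_id cl) -> {in cl &, injective ent_id}.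
Proof.
elim: cl => //= e cl' IH /andP[ni u] e1 e2; rewrite !in_cons.
case/orP=> [/eqP->|h1]; case/orP=> [/eqP->|h2] // E.
- by case/negP: ni; rewrite E map_f.
- by case/negP: ni; rewrite -E map_f.
- exact: IH.
Qed.

Section RemoveClient.
Variables (cl : seq entry) (e0 : entry).
Hypotheses (u : uniq (map ent_id cl)) (e0in : e0 \in cl).

Lemma ent_id_rem_client e : e \in rem_client (ent_id e0) cl -> ent_id e != ent_id e0.
Proof. by rewrite mem_filter => /andP[]. Qed.

Lemma perm_rem_client : perm_eq cl (e0 :: rem_client (ent_id e0) cl).
Proof.
have uc : uniq cl := map_uniq u.
rewrite /rem_client -(eq_in_filter (a1 := predC1 e0)) -?rem_filter ?perm_to_rem //.
move=> e ein /=; apply/idP/idP; apply: contra => /eqP E; apply/eqP.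
- exact: (ent_id_inj u).
- by rewrite E.
Qed.

Lemma size_rem_client : size cl = (size (rem_client (ent_id e0) cl)).+1.
Proof. by rewrite (perm_size perm_rem_client). Qed.

Lemma load_rem_client x :
  load cl x = (ent_ch e0 == Some x) + load (rem_client (ent_id e0) cl) x.
Proof. by rewrite /load (permP perm_rem_client). Qed.

Lemma load_setch x ch :
  load (setch cl (ent_id e0) ch) x = (ch == Some x) + load (rem_client (ent_id e0) cl) x.
Proof.
rewrite /load (permP (perm_map _ perm_rem_client)) /= eqxx /=; congr (_ + _).
rewrite -{2}(map_id (rem_client _ _)); congr count; apply/eq_in_map => e.
by move/ent_id_rem_client/negbTE->.
Qed.

End RemoveClient.

Lemma load_disjoint cl c c' : c != c' -> load cl c + load cl c' <= size cl.
Proof.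
move=> ne; rewrite /load -count_predUI.
rewrite (@eq_count _ (predI _ _) pred0) ?count_pred0 ?addn0 ?count_size //.
by move=> e /=; case: eqP => //= ->; rewrite eq_Some (negbTE ne).
Qed.

Definition demote (t : nat) (e : entry) : entry :=
  if exceeds t e then (e.1, None) else e.

Lemma load_demote cl t x :
  load (map (demote t) cl) x = if 2 * t < x.1 then 0 else load cl x.
Proof.
rewrite /load count_map /demote /exceeds.
case: ifP => hx; [apply: etrans (count_pred0 cl) |]; apply: eq_count => e /=;
  case E: (ent_ch e) => [c|] /=; rewrite ?E //; case: ifP => hc /=; rewrite ?E //.
- by rewrite eq_Some; apply/eqP => ec; rewrite -ec hc in hx.
- by rewrite eq_Some; apply/esym/eqP => ec; rewrite -ec hc in hx.
Qed.

Definition partial (cl : seq entry) (c : nat * nat) : bool := 0 < load cl c < c.1.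

Definition channels_ok (cl : seq entry) : Prop :=
  (forall c, load cl c <= c.1) /\
  (forall c c', partial cl c -> partial cl c' -> c.1 = c'.1 -> c = c').

Lemma channels_ok_sub cl cl' : channels_ok cl ->
  (forall c, load cl' c <= c.1) -> (forall c, partial cl' c -> partial cl c) ->
  channels_ok cl'.
Proof. by move=> [_ uniq_partial] cap sub; split=> // c c' /sub + /sub; apply: uniq_partial. Qed.

Lemma channels_ok_place cl cl' w c : channels_ok cl -> place_ok cl w c ->
  (forall x, load cl' x = (c == x) + load cl x) -> channels_ok cl'.
Proof.
move=> [cap uniq_partial] [cw [lc choice]] E; split=> [x|].
  by rewrite E; case: eqP => [<-|_]; [rewrite cw | rewrite cap].
have only_c x : partial cl x -> x.1 = w -> x = c.
  case: choice => [[l0 _] px xw|[_ none] /andP[x0 xw]]; last first.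
    by move=> x1; case: (none x.2); rewrite -x1 -surjective_pairing x0.
  by apply: uniq_partial px _ _; rewrite ?cw // /partial l0 cw.
have sub x : partial cl' x -> x != c -> partial cl x.
  by move=> + /negbTE nx; rewrite /partial E eq_sym nx.
move=> c1 c2 p1 p2; have [-> | n1] := eqVneq c1 c; have [-> | n2] := eqVneq c2 c => // e12.
- by rewrite (only_c c2 (sub _ p2 n2)) // -e12.
- by rewrite (only_c c1 (sub _ p1 n1)) // e12.
- exact: uniq_partial (sub _ p1 n1) (sub _ p2 n2) e12.
Qed.

Definition entries_ok (cl : seq entry) (L : seq label) : Prop :=
  uniq (map ent_id cl) /\
  forall e c, e \in cl -> ent_ch e = Some c ->
    c.1 = ent_w e /\ ent_w e < 2 * cpow2 (last_n L (ent_id e)).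

Lemma entries_ok_rem cl L i : entries_ok cl L -> entries_ok (rem_client i cl) L.
Proof.
case=> u ok; split; first exact: subseq_uniq (map_subseq _ (filter_subseq _ _)) u.
by move=> e c; rewrite mem_filter => /andP[_]; apply: ok.
Qed.

Lemma entries_ok_setch cl L e0 c m : entries_ok cl L -> e0 \in cl ->
  c.1 = ent_w e0 -> ent_w e0 < 2 * cpow2 m ->
  entries_ok (setch cl (ent_id e0) (Some c)) (rcons L (LAlloc (ent_id e0) m)).
Proof.
case=> u ok e0in cw wm; split; first by rewrite map_ent_id_setch.
move=> e c' /mapP[e' e'in ->]; rewrite last_n_rcons /=.
case: ifP => [/eqP E [<-]|ne]; last by rewrite eq_sym ne; apply: ok.
by rewrite (ent_id_inj u e'in e0in E) eqxx.
Qed.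

Lemma entries_ok_cons cl L i w ch m : entries_ok cl L -> i \notin map ent_id cl ->
  (forall c, ch = Some c -> c.1 = w /\ w < 2 * cpow2 m) ->
  entries_ok ((i, w, ch) :: cl) (rcons L (LAlloc i m)).
Proof.
case=> u ok ni new; split; first by rewrite /= ni.
move=> e c; rewrite in_cons last_n_rcons /= => /orP[/eqP-> /new|ein]; first by rewrite eqxx.
have [E|] := eqVneq i (ent_id e); last by move=> _; apply: ok.
by case/negP: ni; rewrite E map_f.
Qed.

Definition state_ok (st : state) (L : seq label) : Prop :=
  [/\ entries_ok (clients st) L, channels_ok (clients st),
      tau st = 2 * cpow2 (cnt st) & cnt st = size (clients st)].

Definition is_alloc (l : label) : bool := if l is LAlloc _ _ then true else false.

Definition demotions_bounded (L0 L : seq label) : Prop :=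
  forall p j m, nth dflt_label L p = LToBig j m -> 2 * m <= last_n (L0 ++ take p L) j.

Lemma demotions_bounded_alloc L0 L : all is_alloc L -> demotions_bounded L0 L.
Proof.
move=> al p j m; case: (ltnP p (size L)) => lp; last by rewrite nth_default.
by move: (all_nthP dflt_label al p lp); case: (nth _ _ _).
Qed.

Lemma demotions_bounded_cat L0 L L' : demotions_bounded L0 L ->
  demotions_bounded (L0 ++ L) L' -> demotions_bounded L0 (L ++ L').
Proof.
move=> bL bL' p j m; rewrite nth_cat take_cat; case: ifP => _; first exact: bL.
by rewrite catA; apply: bL'.
Qed.

Lemma bigfix_ok n t cl Lb cl' L : bigfix n t cl Lb cl' -> t = 2 * cpow2 n ->
  entries_ok cl L -> channels_ok cl ->
  [/\ entries_ok cl' (L ++ Lb), channels_ok cl', map ent_id cl' = map ent_id cl,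
      size cl' = size cl & all is_alloc Lb].
Proof.
move=> bf; elim: bf L => {cl Lb cl'} [cl _ L _ ok ch | cl i w c Lb cl' iin wt pok _ IH L tn ok ch].
  by rewrite cats0.
have u := ok.1; have [cw _] := pok.
have wn : w < 2 * cpow2 n by move: wt; rewrite tn mulKn //; lia.
have ld x : load (setch cl i (Some c)) x = (c == x) + load cl x.
  by rewrite (load_setch u iin) (load_rem_client u iin).
have [ok' ch' ids' sz' al'] :=
  IH _ tn (entries_ok_setch ok iin cw wn) (channels_ok_place ch pok ld).
rewrite -cats1 -catA in ok'.
by rewrite ids' sz' map_ent_id_setch size_map.
Qed.

Lemma arr_update_ok n t cl t1 L1 cl1 L : t = 2 * cpow2 n ->
  entries_ok cl L -> channels_ok cl -> arr_update n.+1 t cl t1 L1 cl1 ->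
  t1 = 2 * cpow2 n.+1 /\
  [/\ entries_ok cl1 (L ++ L1), channels_ok cl1, map ent_id cl1 = map ent_id cl,
      size cl1 = size cl & all is_alloc L1].
Proof.
rewrite /arr_update => tn ok ch; case: ifP => [_ [-> bf] | grow [-> -> ->]].
  by split=> //; apply: bigfix_ok bf _ ok ch.
split; last by rewrite cats0.
by have := cpow2_mono (leqnSn n); move: grow; rewrite tn; lia.
Qed.

Lemma arrival_ok st L i w t1 L1 cl1 ch : state_ok st L ->
  i \notin map ent_id (clients st) ->
  arr_update (cnt st).+1 (tau st) (clients st) t1 L1 cl1 ->
  arr_place t1 cl1 w ch ->
  let L' := L1 ++ [:: LAlloc i (cnt st).+1] in
  state_ok (State (cnt st).+1 t1 ((i, w, ch) :: cl1)) (L ++ L') /\ all is_alloc L'.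
Proof.
case: st => n t cl [/= ok ch_ok tn sz] /= ni au ap.
have [ht1 [ok1 ch1 ids1 sz1 al1]] := arr_update_ok tn ok ch_ok au; subst t1.
rewrite -ids1 in ni; split; last by rewrite all_cat al1.
have ld x : load ((i, w, ch) :: cl1) x = (ch == Some x) + load cl1 x by [].
split=> //=; last by rewrite sz1 sz.
- rewrite catA cats1; apply: entries_ok_cons ok1 ni _ => c E.
  move: ap; rewrite /arr_place E; case: ifP => // /negbT; rewrite -ltnNge.
  by move=> lt [_ [[<-] [cw _]]].
- move: ap ld; rewrite /arr_place; case: ifP => [_ -> ld | _ [c [-> pok]] ld].
    by apply: (channels_ok_sub ch1) => x; rewrite /partial ld //=; apply: ch1.1.
  exact: channels_ok_place ch1 pok ld.
Qed.

Lemma channels_ok_rem_client cl e0 : uniq (map ent_id cl) -> e0 \in cl ->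
  channels_ok cl ->
  (forall c, ent_ch e0 = Some c -> partial (rem_client (ent_id e0) cl) c ->
     forall c', c' != c -> c'.1 = c.1 -> ~~ partial cl c') ->
  channels_ok (rem_client (ent_id e0) cl).
Proof.
move=> u e0in [cap uniq_partial] alone; have ld := load_rem_client u e0in.
have sub x : partial (rem_client (ent_id e0) cl) x -> ent_ch e0 != Some x -> partial cl x.
  by move=> + /negbTE nx; rewrite /partial ld nx.
split=> [x|]; first by apply: leq_trans (cap x); rewrite ld leq_addl.
case E: (ent_ch e0) sub => [c|] sub c1 c2; last first.
  by move=> p1 p2; apply: uniq_partial; apply: sub.
have [-> | n1] := eqVneq c1 c; have [-> | n2] := eqVneq c2 c => // p1 p2 e12.
- by case/negP: (alone c E p1 c2 n2 (esym e12)); apply: sub; rewrite // eq_Some eq_sym.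
- by case/negP: (alone c E p2 c1 n1 e12); apply: sub; rewrite // eq_Some eq_sym.
- by apply: uniq_partial e12; apply: sub; rewrite // eq_Some eq_sym.
Qed.

Lemma compaction_move_ok cl L i w c c' e :
  entries_ok cl L -> channels_ok cl -> (i, w, Some c) \in cl -> c.1 = w ->
  c' <> c -> c'.1 = w -> partial (rem_client i cl) c' ->
  load (rem_client i cl) c != 0 ->
  e \in rem_client i cl -> ent_ch e = Some c' ->
  let cl1 := setch (rem_client i cl) (ent_id e) (Some c) in
  let L1 := [:: LAlloc (ent_id e) (size cl).-1] in
  [/\ entries_ok cl1 (L ++ L1), channels_ok cl1, size cl1 = (size cl).-1 & all is_alloc L1].
Proof.
move=> ok [cap uniq_partial] ein cw /eqP nc' c'w pc' nz erm ech /=.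
have ok_rm := entries_ok_rem i ok.
have ldc := load_rem_client ok.1 ein; have ldr := load_rem_client ok_rm.1 erm.
have lds := load_setch ok_rm.1 erm; have sz := size_rem_client ok.1 ein.
rewrite -[ent_id (i, w, Some c)]/i /= ech in ldc ldr lds sz.
have same x : x != c -> load (rem_client i cl) x = load cl x.
  by move=> nx; rewrite ldc eq_Some eq_sym (negbTE nx).
(* Otherwise c and c' were two partial w-channels before the departure. *)
have full : load cl c = w.
  apply/eqP; rewrite eqn_leq -{1}cw cap leqNgt; apply/negP => lt; apply: (elimN eqP nc').
  apply: uniq_partial; rewrite ?cw ?c'w //.
    by rewrite /partial -(same c'); [exact: pc' | exact: nc'].
  by rewrite /partial /= cw lt andbT ldc eqxx.
have wn : w <= (size cl).-1.
  have := load_disjoint (rem_client i cl) nc'.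
  by move: pc' (ldc c); rewrite /partial full eqxx sz c'w /=; lia.
have ld1 x : load (setch (rem_client i cl) (ent_id e) (Some c)) x = load cl x - (c' == x).
  by move: (lds x (Some c)) (ldc x) (ldr x); rewrite !eq_Some; lia.
split; rewrite ?size_map //; last by rewrite sz.
- rewrite cats1; have [ew _] := ok_rm.2 e c' erm ech.
  apply: entries_ok_setch ok_rm erm _ _; first by rewrite cw -c'w.
  by rewrite -ew c'w; have := leq_cpow2 (size cl).-1; have := cpow2_gt0 (size cl).-1; lia.
- apply: (channels_ok_sub (conj cap uniq_partial)) => x; rewrite /partial ld1.
    exact: leq_trans (leq_subr _ _) (cap x).
  have [<-|nx'] := eqVneq c' x.
    by move: pc'; rewrite /partial same //; lia.
  have [<-|nx] := eqVneq c x; first by rewrite subn0 full cw ltnn andbF.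
  by rewrite subn0.
Qed.

Lemma compaction_ok cl L i w ch L1 cl1 :
  entries_ok cl L -> channels_ok cl -> (i, w, ch) \in cl ->
  dep_compact (size cl).-1 w (rem_client i cl) ch L1 cl1 ->
  [/\ entries_ok cl1 (L ++ L1), channels_ok cl1, size cl1 = (size cl).-1 & all is_alloc L1].
Proof.
move=> ok ch_ok ein; have ok_rm := entries_ok_rem i ok.
have sz := size_rem_client ok.1 ein; have ldc := load_rem_client ok.1 ein.
rewrite -[ent_id (i, w, ch)]/i /= in sz ldc.
have rm_ok := channels_ok_rem_client ok.1 ein ch_ok; rewrite -[ent_id (i, w, ch)]/i /= in rm_ok.
have done_ok : channels_ok (rem_client i cl) -> [/\ entries_ok (rem_client i cl) (L ++ [::]),
    channels_ok (rem_client i cl), size (rem_client i cl) = (size cl).-1 & all is_alloc [::]].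
  by rewrite cats0 sz.
case: ch ein ldc rm_ok => [c|] ein ldc rm_ok /=; last by case=> -> ->; apply/done_ok/rm_ok.
have [cw _] := ok.2 _ c ein erefl.
case: ifP => [/eqP empty [-> ->] | /negbT nz].
  by apply/done_ok/rm_ok => _ [<-]; rewrite /partial empty.
case=> [[alone [-> ->]] | [c' [e [nc' [c'w [pw [erm [ech [-> ->]]]]]]]]].
  apply/done_ok/rm_ok => _ [<-] _ c' /eqP nc' c'w; apply/negP; rewrite /partial.
  rewrite ldc eq_Some eq_sym (introF eqP nc') /= c'w cw.
  by apply: alone; rewrite ?c'w.
have pc' : partial (rem_client i cl) c' by rewrite /partial c'w.
exact: compaction_move_ok ok ch_ok ein cw nc' c'w pc' nz erm ech.
Qed.

Lemma nth_notin_take (T : eqType) (x0 : T) (s : seq T) p :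
  uniq s -> p < size s -> nth x0 s p \notin take p s.
Proof. by move=> u lt; apply/negP => /index_ltn; rewrite index_uniq // ltnn. Qed.

Lemma dep_tau_ok n t cl L : entries_ok cl L -> channels_ok cl ->
  let: (t', LT, cl') := dep_tau n t cl in
  [/\ entries_ok cl' (L ++ LT), channels_ok cl', size cl' = size cl &
      demotions_bounded L LT].
Proof.
move=> [u ok] [cap uniq_partial]; rewrite /dep_tau; case: ifP => _; last first.
  by rewrite cats0; split=> //; apply: demotions_bounded_alloc.
set T := 2 * cpow2 n; set s := [seq e <- cl | exceeds T e].
have us : uniq (map ent_id s) by apply: subseq_uniq u; apply/map_subseq/filter_subseq.
have ids : map lab_client [seq LToBig (ent_id e) n | e <- s] = map ent_id s by rewrite -map_comp.
have kept e : e \in cl -> ~~ exceeds T e -> ent_id e \notin map ent_id s.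
  move=> ein ne; apply/mapP => -[e' e'in E]; move: e'in; rewrite mem_filter => /andP[ex e'in].
  by rewrite (ent_id_inj u ein e'in E) ex in ne.
split.
- split; first by rewrite -map_comp (eq_map (g := ent_id)) // => e /=; rewrite /demote; case: ifP.
  move=> e c /mapP[e' e'in ->]; rewrite /demote; case: ifP => // ne ech.
  by rewrite last_n_cat ?ids ?kept ?ne //; apply: ok.
- split=> [x|c c']; rewrite /partial !load_demote; first by case: ifP.
  by case: ifP => //; case: ifP => // _ _; apply: uniq_partial.
- by rewrite size_map.
move=> p j m; case: (ltnP p (size s)) => lp; last by rewrite nth_default ?size_map.
rewrite (nth_map (0, 0, None)) // => -[Ej Em].
set e := nth (0, 0, None) s p.
have : e \in s by apply: mem_nth.
rewrite mem_filter => /andP[]; rewrite /exceeds; case ech: (ent_ch e) => [c|] // hc ein.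
rewrite -map_take last_n_cat; last first.
  by rewrite -map_comp -Ej -(nth_map _ 0) // map_take nth_notin_take // size_map.
have [cw wb] := ok e c ein ech; apply: cpow2_double_lt.
by move: hc wb; rewrite -Ej -Em cw /T -/e; lia.
Qed.

Lemma dep_tau_threshold n t cl : t = 2 * cpow2 n.+1 -> (dep_tau n t cl).1.1 = 2 * cpow2 n.
Proof.
rewrite /dep_tau => tn; case: ifP => // /negbT; rewrite -leqNgt tn /=.
by have := cpow2_mono (leqnSn n); lia.
Qed.

Lemma step_ok st ev L' st' L : state_ok st L -> step st ev L' st' ->
  state_ok st' (L ++ L') /\ demotions_bounded L L'.
Proof.
move=> + s; case: s => {st ev L' st'} [st i w t1 L1 cl1 ch _ ni au ap ok | st i w ch L1 cl1].
  have [ok' al] := arrival_ok ok ni au ap.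
  by split=> //; apply: demotions_bounded_alloc.
case: st => n t cl ein dc [/= ok ch_ok tn sz]; subst n.
have [ok1 ch1 sz1 al1] := compaction_ok ok ch_ok ein dc.
have cl0 : 0 < size cl by case: (cl) ein.
have := dep_tau_ok (size cl).-1 t ok1 ch1.
have := @dep_tau_threshold (size cl).-1 t cl1; rewrite prednK // => /(_ tn).
case: (dep_tau _ _ _) => [[t' LT] cl2] /= -> [ok2 ch2 sz2 bd2].
split; first by split; rewrite ?catA ?sz2 ?sz1.
exact: demotions_bounded_cat (demotions_bounded_alloc _ al1) bd2.
Qed.

Lemma run_ok evs st L : run evs st L -> state_ok st L /\ demotions_bounded [::] L.
Proof.
elim=> {evs st L} [|evs st L ev L' st' _ [ok bd] s].
  by split; [split | move=> p j m; rewrite nth_nil].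
have [ok' bd'] := step_ok ok s.
by split=> //; apply: demotions_bounded_cat.
Qed.

Theorem lemma3 (evs : seq event) (st : state) (L : seq label)
    (k k' i n n' : nat) :
  run evs st L ->
  nth dflt_label L k = LToBig i n ->
  k' < k ->
  lab_client (nth dflt_label L k') = i ->
  lab_n (nth dflt_label L k') = n' ->
  (forall m, k' < m < k -> lab_client (nth dflt_label L m) != i) ->
  2 * n <= n'.
Proof.
move=> r hk lt hc hn gap.
have ks : k < size L.
  by case: (ltnP k (size L)) => // /(nth_default dflt_label); rewrite hk.
have [_ bd] := run_ok r.
rewrite -hn -(last_n_take (k := k) _ hc gap); last by rewrite lt ltnW.
by rewrite -[take k L]/([::] ++ take k L); apply: bd.
Qed.
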